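(* Let $G$ be a group with generating set $S$ not containing the identity, and let $g,h$ be distinct elements of $G$. Then $d_C(g,h)$ equals the minimum number of distinct colors of arcs occurring in an (undirected) path connecting $g$ and $h$ in the Cayley color digraph of $G$ with respect to $S$.
   Context: The cardinal norm is $\|x\| = \min\{|A| : A\subseteq S,\ x\in\langle A\rangle\}$, where $\langle A\rangle$ is the subgroup generated by $A$, and the cardinal metric is $d_C(g,h)=\|g^{-1}h\|$. The Cayley color digraph of $G$ with respect to $S$ has vertex set $G$, and for each $x\in G$ and $c\in S$ an arc $(x,xc)$ with color $c$ (distinct elements of $S$ are distinct colors). An undirected path from $g$ to $h$ is a sequence $g=x_0,e_1,x_1,\dots,e_n,x_n=h$ of vertices and arcs with $e_i\in\{(x_{i-1},x_i),(x_i,x_{i-1})\}$ for each $i$; its colors are the colors of the arcs $e_i$. *)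

From Stdlib Require Import List.
Import ListNotations.

Record Group := {
  carrier :> Type;
  gmul : carrier -> carrier -> carrier;
  gone : carrier;
  ginv : carrier -> carrier;
  gmulA : forall x y z, gmul x (gmul y z) = gmul (gmul x y) z;
  gmul1g : forall x, gmul gone x = x;
  gmulVg : forall x, gmul (ginv x) x = gone
}.

Arguments gmul {g}. Arguments gone {g}. Arguments ginv {g}.

Inductive gen {G : Group} (A : G -> Prop) : G -> Prop :=
| gen_one : gen A gone
| gen_in : forall a, A a -> gen A a
| gen_mul : forall x y, gen A x -> gen A y -> gen A (gmul x y)
| gen_inv : forall x, gen A x -> gen A (ginv x).

Definition generates {G : Group} (S : G -> Prop) : Prop := forall x : G, gen S x.

Definition IsLeast (P : nat -> Prop) (n : nat) : Prop :=
  P n /\ forall m, P m -> n <= m.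

Definition norm_witness {G : Group} (S : G -> Prop) (x : G) (k : nat) : Prop :=
  exists A : list G, NoDup A /\ (forall a, In a A -> S a) /\
    gen (fun a => In a A) x /\ length A = k.

Definition dC_is {G : Group} (S : G -> Prop) (g h : G) (n : nat) : Prop :=
  IsLeast (norm_witness S (gmul (ginv g) h)) n.

(* An undirected path in the Cayley color digraph, starting at a vertex x,
   is a list of steps (b, c) with c in S the color of the traversed arc:
   b = true : traverse arc (x, x c) forwards, reaching x c;
   b = false: traverse arc (x c^{-1}, x) backwards, reaching x c^{-1}. *)
Fixpoint path_end {G : Group} (x : G) (p : list (bool * G)) : G :=
  match p with
  | [] => x
  | (b, c) :: p' => path_end (if b then gmul x c else gmul x (ginv c)) p'
  end.

Definition is_path {G : Group} (S : G -> Prop) (g h : G) (p : list (bool * G)) : Prop :=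
  (forall s, In s p -> S (snd s)) /\ path_end g p = h.

Definition num_colors {G : Group} (p : list (bool * G)) (k : nat) : Prop :=
  exists C : list G, NoDup C /\ (forall c, In c C <-> In c (map snd p)) /\ length C = k.

Definition path_colors_witness {G : Group} (S : G -> Prop) (g h : G) (k : nat) : Prop :=
  exists p, is_path S g h p /\ num_colors p k.

(* A path from g to h whose colours lie in C spells g^-1 h as a word in C and
   the inverses of C, so g^-1 h lies in <C>; conversely any such word, read
   letter by letter from g, is a path from g to h with colours in C.  Hence
   the two minima are taken over the same sets of colour sets. *)

From Stdlib Require Import List ClassicalEpsilon Lia.
Import ListNotations.

Section GroupFacts.
Variable G : Group.

Lemma gmulgV (x : G) : gmul x (ginv x) = gone.
Proof.
  set (e := gmul x (ginv x)).
  assert (He : gmul e e = e).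
  { unfold e; rewrite <- (gmulA _ x), (gmulA _ (ginv x) x), gmulVg, gmul1g.
    reflexivity. }
  transitivity (gmul (gmul (ginv e) e) e).
  - rewrite gmulVg, gmul1g; reflexivity.
  - rewrite <- gmulA, He; apply gmulVg.
Qed.

Lemma gmulg1 (x : G) : gmul x gone = x.
Proof. rewrite <- (gmulVg _ x), gmulA, gmulgV, gmul1g; reflexivity. Qed.

Lemma gen_sub (A B : G -> Prop) x :
  (forall a, A a -> B a) -> gen A x -> gen B x.
Proof. intros AB Hx; induction Hx; eauto using gen. Qed.

Definition undup (l : list G) : list G :=
  nodup (fun x y => excluded_middle_informative (x = y)) l.

Lemma NoDup_undup l : NoDup (undup l).
Proof. apply NoDup_nodup. Qed.

Lemma mem_undup l x : In x (undup l) <-> In x l.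
Proof. apply nodup_In. Qed.

Lemma norm_witness_exists (S : G -> Prop) x : gen S x -> exists k, norm_witness S x k.
Proof.
  intro Hx.
  assert (Hfin : exists A : list G, (forall a, In a A -> S a) /\ gen (fun a => In a A) x).
  { induction Hx as [| a Sa | x y _ [A [SA HA]] _ [B [SB HB]] | x _ [A [SA HA]]].
    - exists []; split; [contradiction | constructor].
    - exists [a]; split; [intros ? [<- | []]; exact Sa | apply gen_in; left; auto].
    - exists (A ++ B); split.
      + intros c Hc; apply in_app_or in Hc; destruct Hc; auto.
      + apply gen_mul; eapply gen_sub; eauto; intros; apply in_or_app; auto.
    - exists A; split; [exact SA | apply gen_inv, HA]. }
  destruct Hfin as [A [SA HA]].
  exists (length (undup A)), (undup A); repeat split.
  - apply NoDup_undup.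
  - intros a Ha; apply SA, mem_undup, Ha.
  - eapply gen_sub; [| exact HA]; intros a Ha; apply mem_undup, Ha.
Qed.

Definition path_rev (p : list (bool * G)) : list (bool * G) :=
  rev (map (fun s => (negb (fst s), snd s)) p).

Lemma path_end_cat (y : G) p q : path_end y (p ++ q) = path_end (path_end y p) q.
Proof. revert y; induction p as [|[b c] p IH]; intro y; simpl; auto. Qed.

Lemma path_end_rev (y : G) p : path_end (path_end y p) (path_rev p) = y.
Proof.
  revert y; induction p as [|[b c] p IH]; intro y; simpl; auto.
  unfold path_rev in *; simpl; rewrite path_end_cat, IH; simpl.
  destruct b; simpl; rewrite <- gmulA.
  - rewrite gmulgV, gmulg1; reflexivity.
  - rewrite gmulVg, gmulg1; reflexivity.
Qed.

Lemma colors_path_rev p : map snd (path_rev p) = rev (map snd p).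
Proof. unfold path_rev; rewrite map_rev, map_map; reflexivity. Qed.

Lemma path_of_gen (C : list G) x : gen (fun a => In a C) x ->
  forall y, exists p, incl (map snd p) C /\ path_end y p = gmul y x.
Proof.
  induction 1 as [| a Ca | x z _ IHx _ IHz | x _ IHx]; intro y.
  - exists []; split; [intros ? [] | symmetry; apply gmulg1].
  - exists [(true, a)]; split; [intros ? [<- | []]; exact Ca | reflexivity].
  - destruct (IHx y) as [p [Cp Hp]], (IHz (gmul y x)) as [q [Cq Hq]].
    exists (p ++ q); split.
    + rewrite map_app; apply incl_app; assumption.
    + rewrite path_end_cat, Hp, Hq, gmulA; reflexivity.
  - destruct (IHx (gmul y (ginv x))) as [p [Cp Hp]].
    rewrite <- gmulA, gmulVg, gmulg1 in Hp.
    exists (path_rev p); split.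
    + rewrite colors_path_rev; intros c Hc; apply Cp, in_rev, Hc.
    + rewrite <- (path_end_rev (gmul y (ginv x)) p), Hp; reflexivity.
Qed.

Lemma gen_of_path (C : list G) p : incl (map snd p) C ->
  forall y, exists z, gen (fun a => In a C) z /\ path_end y p = gmul y z.
Proof.
  induction p as [|[b c] p IH]; intros Cp y; simpl in *.
  - exists gone; split; [constructor | symmetry; apply gmulg1].
  - destruct (incl_cons_inv Cp) as [Cc Cp'].
    destruct (IH Cp' (if b then gmul y c else gmul y (ginv c)))
      as [z [Hz Hend]].
    exists (gmul (if b then c else ginv c) z); split.
    + apply gen_mul; [destruct b; auto using gen | exact Hz].
    + rewrite Hend; destruct b; symmetry; apply gmulA.
Qed.

End GroupFacts.

Section CardinalMetric.
Variables (G : Group) (S : G -> Prop) (g h : G).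

Lemma norm_witness_of_path_colors k :
  path_colors_witness S g h k -> norm_witness S (gmul (ginv g) h) k.
Proof.
  intros [p [[Sp Hend] [C [NoDupC [memC sizeC]]]]].
  assert (pC : incl (map snd p) C) by (intros c Hc; apply memC, Hc).
  exists C; repeat split; auto.
  - intros c Hc; apply memC, in_map_iff in Hc.
    destruct Hc as [s [<- Hs]]; apply Sp, Hs.
  - destruct (gen_of_path G C p pC g) as [z [Cz Hz]].
    rewrite Hend in Hz; rewrite Hz, gmulA, gmulVg, gmul1g; exact Cz.
Qed.

Lemma path_colors_of_norm_witness k :
  norm_witness S (gmul (ginv g) h) k -> exists k', k' <= k /\ path_colors_witness S g h k'.
Proof.
  intros [A [NoDupA [SA [HA sizeA]]]].
  destruct (path_of_gen G A _ HA g) as [p [pA Hend]].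
  rewrite gmulA, gmulgV, gmul1g in Hend.
  exists (length (undup G (map snd p))); split.
  - subst k; apply NoDup_incl_length; [apply NoDup_undup |].
    intros c Hc; apply pA, mem_undup, Hc.
  - exists p; split.
    + split; [intros s Hs; apply SA, pA, in_map, Hs | exact Hend].
    + exists (undup G (map snd p)); repeat split; try apply mem_undup.
      apply NoDup_undup.
Qed.

End CardinalMetric.

Lemma IsLeast_exists (P : nat -> Prop) k : P k -> exists n, IsLeast P n.
Proof.
  induction k as [k IH] using (well_founded_induction Wf_nat.lt_wf); intro Pk.
  destruct (classic (exists m, m < k /\ P m)) as [[m [ltmk Pm]] | noSmaller].
  - exact (IH m ltmk Pm).
  - exists k; split; [exact Pk |].
    intros m Pm; destruct (Compare_dec.le_lt_dec k m) as [lekm | ltmk]; [exact lekm |].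
    exfalso; eauto.
Qed.

Lemma IsLeast_transfer (P Q : nat -> Prop) n :
  (forall k, P k -> Q k) -> (forall k, Q k -> exists k', k' <= k /\ P k') ->
  IsLeast Q n -> IsLeast P n.
Proof.
  intros PQ QP [Qn leastQ].
  destruct (QP n Qn) as [k [lekn Pk]].
  assert (k = n) as <- by (specialize (leastQ k (PQ k Pk)); lia).
  split; [exact Pk | intros m Pm; apply leastQ, PQ, Pm].
Qed.

Theorem mainTheorem9 (G : Group) (S : G -> Prop)
  (hgen : generates S) (h1 : ~ S gone) (g h : G) (hgh : g <> h) :
  exists n : nat, dC_is S g h n /\ IsLeast (path_colors_witness S g h) n.
Proof.
  destruct (norm_witness_exists G S _ (hgen (gmul (ginv g) h))) as [k Hk].
  destruct (IsLeast_exists _ k Hk) as [n Hn].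
  exists n; split; [exact Hn |].
  exact (IsLeast_transfer _ _ n (norm_witness_of_path_colors G S g h)
           (path_colors_of_norm_witness G S g h) Hn).
Qed.
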